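(* Let $(\mathcal G,(\cdot,\cdot),\mathcal H)$ be a generalized reductive Lie algebra with root system $R$ and let $\dot{\mathcal H}_1,\dots,\dot{\mathcal H}_k$, $\mathcal H(R)$, $\mathcal H^0(R)$ be as in the context. Then (i) the form $(\cdot,\cdot)$ restricted to each $\dot{\mathcal H}_i$ is nondegenerate; (ii) $\mathcal H(R)=\mathcal H^0(R)\oplus\big(\bigoplus_{i=1}^k\dot{\mathcal H}_i\big)$; (iii) $\mathcal H^0(R)=\mathrm{span}_{\mathbb C}\{t_\delta:\delta\in R^0\}$.
   Context: GRLA: $\mathcal G$ complex Lie algebra, $\mathcal H$ subalgebra, $(\cdot,\cdot)$ bilinear form with (GR1) form symmetric, nondegenerate, invariant; (GR2) $\mathcal H$ nontrivial finite-dimensional abelian, self-centralizing, $\mathrm{ad}(h)$ diagonalizable; root spaces $\mathcal G_\alpha$, root system $R=\{\alpha\in\mathcal H^*:\mathcal G_\alpha\ne0\}$; $t_\alpha\in\mathcal H$ with $(t_\alpha,h)=\alpha(h)$, $(\alpha,\beta):=(t_\alpha,t_\beta)$; $R^\times=\{\alpha:(\alpha,\alpha)\ne0\}$, $R^0=R\setminus R^\times$; (GR3) $\mathrm{ad}(x)$ locally nilpotent for $x\in\mathcal G_\alpha$, $\alpha\in R^\times$; (GR4) $R$ discrete; (GR5) $R^\times\neq\emptyset$. Let $R^\times=R^\times_1\cup\dots\cup R^\times_k$ be the partition into classes of the equivalence relation generated by $\alpha\sim\beta$ if $(\alpha,\beta)\ne0$. Let $\mathcal V$ be the real span of $R$,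 $\mathcal V^0=\{v\in\mathcal V:(v,\mathcal V)=0\}$, $\bar{\ }:\mathcal V\to\mathcal V/\mathcal V^0$, $\bar{\mathcal V}_i$ the image of the real span of $R_i^\times$ and $\bar R_i=\{\bar\alpha:\alpha\in R_i^\times\}\cup\{0\}$; for suitable $c_i\neq0$, $\bar R_i$ is an irreducible finite root system in $\bar{\mathcal V}_i$ with respect to $c_i(\cdot,\cdot)$. Choose a base $\{\bar\alpha_{i1},\dots,\bar\alpha_{i\ell_i}\}$ of $\bar R_i$, preimages $\alpha_{ij}\in R_i^\times$, let $\dot{\mathcal V}_i$ be their real span and $\dot R_i=\{\alpha\in\dot{\mathcal V}_i:\bar\alpha\in\bar R_i\}$. Set $\dot{\mathcal H}_i=\mathrm{span}_{\mathbb C}\{t_\alpha:\alpha\in\dot R_i\}$, $\mathcal H(R)=\mathrm{span}_{\mathbb C}\{t_\alpha:\alpha\in R\}$ and $\mathcal H^0(R)=\{h\in\mathcal H(R):(h,\mathcal H(R))=\{0\}\}$. *)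

From HB Require Import structures.
From mathcomp Require Import all_boot all_order all_algebra.
From mathcomp Require Import reals complex.
From Stdlib Require Import Relations.
Set Implicit Arguments. Unset Strict Implicit. Unset Printing Implicit Defensive.
Import Order.TTheory GRing.Theory Num.Theory.
Local Open Scope ring_scope.
Local Open Scope complex_scope.

Section GRLA.
Variable R : realType.
Local Notation C := R[i].
(* G : a complex vector space (possibly infinite dimensional) *)
Variable V : lmodType C.
(* H : a finite dimensional complex space, embedded in G by iota *)
Variable Hs : vectType C.
Local Notation Hd := 'Hom(Hs, C^o).

Variables (br : V -> V -> V) (bf : V -> V -> C) (iota : {linear Hs -> V})
          (t : Hd -> Hs).

(* br is a Lie bracket (bilinearity in the 2nd argument follows from
   linearity in the first and alternation) *)
Definition lie_bracket : Prop :=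
  [/\ forall (a : C) x y z, br (a *: x + y) z = a *: br x z + br y z,
      forall x, br x x = 0 &
      forall x y z, br x (br y z) + br y (br z x) + br z (br x y) = 0].

Definition GR1 : Prop :=
  [/\ forall (a : C) x y z, bf (a *: x + y) z = a * bf x z + bf y z,
      forall x y, bf x y = bf y x,
      forall x, (forall y, bf x y = 0) -> x = 0 &
      forall x y z, bf (br x y) z = bf x (br y z)].

Definition root_space (a : Hd) (x : V) : Prop :=
  forall h : Hs, br (iota h) x = a h *: x.

Definition is_root (a : Hd) : Prop := exists x, root_space a x /\ x <> 0.

Definition GR2 : Prop :=
  [/\ injective iota,
      (0 < \dim (fullv : {vspace Hs}))%N,
      forall h h', br (iota h) (iota h') = 0,
      forall x, (forall h, br (iota h) x = 0) -> exists h, x = iota h &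
      forall x, exists s : seq (Hd * V),
        (forall p, p \in s -> root_space p.1 p.2) /\ x = \sum_(p <- s) p.2].

Definition is_t : Prop := forall (a : Hd) (h : Hs), bf (iota (t a)) (iota h) = a h.

Definition fH (a b : Hd) : C := bf (iota (t a)) (iota (t b)).

Definition Rx (a : Hd) : Prop := is_root a /\ fH a a <> 0.
Definition R0 (a : Hd) : Prop := is_root a /\ fH a a = 0.

Definition GR3 : Prop :=
  forall a, Rx a -> forall x, root_space a x ->
    forall y, exists n : nat, iter n (br x) y = 0.

(* (GR4): R is discrete in H^* (sup-norm w.r.t. coordinates on a basis of H) *)
Definition GR4 : Prop :=
  forall a, is_root a -> exists e : R, 0 < e /\
    forall b, is_root b -> b <> a ->
      exists i : 'I_(\dim (fullv : {vspace Hs})),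
        e%:C <= `| b (tnth (vbasis fullv) i) - a (tnth (vbasis fullv) i) |.

Definition GR5 : Prop := exists a, Rx a.

Definition GRLA : Prop := [/\ lie_bracket, GR1, GR2, GR3 & GR4 /\ GR5].

Definition rootrel (a b : Hd) : Prop := [/\ Rx a, Rx b & fH a b <> 0].
Definition rootequiv : Hd -> Hd -> Prop := clos_refl_trans Hd rootrel.

(* cls enumerates (bijectively) the k equivalence classes R^x_1, ..., R^x_k *)
Definition root_partition (k : nat) (cls : 'I_k -> Hd -> Prop) : Prop :=
  [/\ forall i, exists a, cls i a,
      forall i a, cls i a -> Rx a,
      forall a, Rx a -> exists i, cls i a,
      forall i a b, cls i a -> (cls i b <-> rootequiv a b) &
      forall i j a, cls i a -> cls j a -> i = j].

Definition rspan (P : Hd -> Prop) (v : Hd) : Prop :=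
  exists s : seq (R * Hd), (forall p, p \in s -> P p.2) /\
    v = \sum_(p <- s) ((p.1)%:C *: p.2).

Definition cspan (P : Hd -> Prop) (h : Hs) : Prop :=
  exists s : seq (C * Hd), (forall p, p \in s -> P p.2) /\
    h = \sum_(p <- s) (p.1 *: t p.2).

(* V = real span of R ; V^0 its radical *)
Definition Vsp : Hd -> Prop := rspan is_root.
Definition V0 (v : Hd) : Prop := Vsp v /\ forall w, Vsp w -> fH v w = 0.

(* al : 'I_l -> Hd are preimages in R^x_i of a base {bar al_j} of
   bar R_i = {bar a : a \in R^x_i} \cup {0} \subseteq V/V^0 :
   the bar al_j are R-linearly independent in V/V^0 and every element of
   bar R_i is an integral combination of them with coefficients all of the
   same sign. (bar a = bar b iff a - b \in V^0.) *)
Definition is_base (clsi : Hd -> Prop) (l : nat) (al : 'I_l -> Hd) : Prop :=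
  [/\ forall j, clsi (al j),
      forall r : 'I_l -> R, V0 (\sum_j ((r j)%:C *: al j)) -> forall j, r j = 0 &
      forall b, clsi b -> exists z : 'I_l -> int,
        ((forall j, (0 <= z j)%R) \/ (forall j, (z j <= 0)%R)) /\
        V0 (b - \sum_j ((z j)%:~R *: al j))].

(* dot R_i = {a \in dot V_i : bar a \in bar R_i} *)
Definition dotR (clsi : Hd -> Prop) (l : nat) (al : 'I_l -> Hd) (b : Hd) : Prop :=
  rspan (fun a => exists j, a = al j) b /\
  (V0 b \/ exists a, clsi a /\ V0 (b - a)).

Definition dotH (clsi : Hd -> Prop) (l : nat) (al : 'I_l -> Hd) : Hs -> Prop :=
  cspan (dotR clsi al).

Definition HR : Hs -> Prop := cspan is_root.
Definition H0R (h : Hs) : Prop :=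
  HR h /\ forall h', HR h' -> bf (iota h) (iota h') = 0.

End GRLA.

(* Each alpha in R^x gives an sl2-triple e in G_alpha, f in G_-alpha,
   h_alpha = 2 t_alpha / (alpha, alpha).  By (GR3) the alpha-strings of root vectors are
   finite, so the Cartan numbers 2 (beta, alpha) / (alpha, alpha) are integers, and
   beta - alpha is a root whenever this number is positive.

   An isotropic root delta is orthogonal to every root beta.  Otherwise [x, y] = t_delta
   (x in G_delta, y in G_-delta) acts on the delta-string through beta by the nonzero
   scalar (delta, beta); integrality confines the norms
   (beta + j delta, beta + j delta) = (beta, beta) + 2 j (delta, beta) to
   2 (delta, beta) [-1, 1], so ad x kills the string after three steps, and the
   commutation formula for ad x^n ad y pushes this down to ad x^0 = 0 on G_beta.
   Hence R^0 lies in the radical V^0.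

   Within a class R_i^x all values of the form are real multiples of one nonzero value,
   so independence of the base modulo V^0 is nondegeneracy of the real form on the base,
   which passes to its complex span: this is (i).  Distinct classes are orthogonal, which
   makes the sum in (ii) direct.  Finally every alpha in R_i^x is sum_j z_j alpha_ij
   modulo V^0 with z of constant sign; induction on the height sum_j z_j, subtracting at
   each step a base root with positive Cartan number, shows that t of the remainder lies
   in the span of the t_delta, delta in R^0.  This gives the rest of (ii) and (iii). *)

From HB Require Import structures.
From mathcomp Require Import all_boot all_order all_algebra.
From mathcomp Require Import reals complex.
From mathcomp Require Import ring lra.
From Stdlib Require Import Relations Classical.
Set Implicit Arguments. Unset Strict Implicit. Unset Printing Implicit Defensive.
Import Order.TTheory GRing.Theory Num.Theory.
Local Open Scope ring_scope.

Lemma iter_last_neq (T : eqType) (g : T -> T) (z v : T) n :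
  v != z -> iter n g v = z -> exists m, iter m g v != z /\ iter m.+1 g v = z.
Proof.
move=> vz; elim: n => [/eqP|n IHn] /=; first by rewrite (negbTE vz).
by case: (eqVneq (iter n g v) z) => [/IHn //|nz gz]; exists n.
Qed.

Lemma lfun_neq0 (K : fieldType) (U W : vectType K) (f : 'Hom(U, W)) :
  f != 0 -> exists u, f u != 0.
Proof.
move=> fn0; apply: NNPP => fzero; move/eqP: fn0; apply; apply/lfunP => u.
by rewrite zero_lfunE; apply/eqP/negPn/negP => fu; apply: fzero; exists u.
Qed.

Lemma intr_inv_bound (F : realFieldType) (n : int) :
  n != 0 -> -1 <= (n%:~R : F)^-1 <= 1.
Proof.
move=> nn0; rewrite -ler_norml normfV invf_le1 -intr_norm ?ler1z ?ltr0z.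
  by rewrite -gtz0_ge1 normr_gt0.
by rewrite normr_gt0.
Qed.

Local Open Scope complex_scope.

Lemma real_indep_complex (R : rcfType) (I J : finType) (q : I -> J -> R) :
  (forall r : I -> R, (forall k, \sum_j r j * q j k = 0) -> forall j, r j = 0) ->
  forall a : I -> R[i], (forall k, \sum_j a j * (q j k)%:C = 0) -> forall j, a j = 0.
Proof.
move=> indep a asum j.
have Re0 : forall j, complex.Re (a j) = 0.
  apply: indep => k; rewrite -[RHS]/(complex.Re 0) -(asum k).
  rewrite (raddf_sum (@complex.Re R : Rcomplex R -> R)).
  by apply: eq_bigr => j' _; case: (a j') => x y /=; rewrite mulr0 subr0.
have Im0 : forall j, complex.Im (a j) = 0.
  apply: indep => k; rewrite -[RHS]/(complex.Im 0) -(asum k).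
  rewrite (raddf_sum (@complex.Im R : Rcomplex R -> R)).
  by apply: eq_bigr => j' _; case: (a j') => x y /=; rewrite mulr0 add0r.
by rewrite (complexE (a j)) Re0 Im0 rmorph0 mulr0 addr0.
Qed.

Definition decr_at (I : eqType) (z : I -> int) (j : I) : I -> int :=
  fun j' => if j' == j then z j - 1 else z j'.

Lemma decr_at_ge0 (I : eqType) (z : I -> int) j :
  (forall j', 0 <= z j') -> 0 < z j -> forall j', 0 <= decr_at z j j'.
Proof. by move=> zpos zj j'; rewrite /decr_at; case: eqP => _; rewrite ?subr_ge0. Qed.

Lemma decr_at_sum (I : finType) (z : I -> int) j :
  \sum_j' decr_at z j j' = \sum_j' z j' - 1.
Proof.
rewrite (bigD1 j) //= [in RHS](bigD1 j) //= /decr_at eqxx addrAC.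
by congr (_ + _ - _); apply: eq_bigr => j' /negbTE ->.
Qed.

Lemma zcomb_decr_at (K : pzRingType) (M : lmodType K) (I : finType) (v : I -> M)
    (z : I -> int) j :
  \sum_j' (decr_at z j j')%:~R *: v j' = \sum_j' (z j')%:~R *: v j' - v j.
Proof.
rewrite (bigD1 j) //= [in RHS](bigD1 j) //= /decr_at eqxx intrB mulr1z scalerBl.
by rewrite scale1r addrAC; congr (_ + _ - _); apply: eq_bigr => j' /negbTE ->.
Qed.

(** * sl2-strings *)

Section Sl2Strings.
Variables (K : numFieldType) (W : lmodType K).

Definition sl2_relations (e f h : W -> W) :=
  [/\ forall x, e (f x) = f (e x) + h x,
      forall x, h (e x) = e (h x) + 2%:R *: e x &
      forall x, h (f x) = f (h x) - 2%:R *: f x].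

Lemma scalableN (g : W -> W) : scalable g -> {morph g : x / - x}.
Proof. by move=> gZ x; rewrite -scaleN1r gZ scaleN1r. Qed.

Lemma scalable0 (g : W -> W) : scalable g -> g 0 = 0.
Proof. by move=> gZ; have := gZ 0 0; rewrite !scale0r. Qed.

Lemma sl2_relations_swap e f h : scalable e -> scalable f ->
  sl2_relations e f h -> sl2_relations f e (fun x => - h x).
Proof.
move=> eZ fZ [ef he hf]; split=> x; first by rewrite ef addrK.
  by rewrite hf (scalableN fZ) opprB addrC.
by rewrite he (scalableN eZ) opprD.
Qed.

Variables (e f h : W -> W).
Hypotheses (eZ : scalable e) (fZ : scalable f) (sl2 : sl2_relations e f h).

Lemma sl2_weight_iter_f v mu : h v = mu *: v ->
  forall k, h (iter k f v) = (mu - 2%:R * k%:R) *: iter k f v.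
Proof.
case: sl2 => _ _ hf hv; elim=> [|k IHk] /=; first by rewrite mulr0 subr0.
by rewrite hf IHk fZ -scalerBl mulrSr; congr (_ *: _); ring.
Qed.

Lemma sl2_weight_iter_e v mu : h v = mu *: v ->
  forall k, h (iter k e v) = (mu + 2%:R * k%:R) *: iter k e v.
Proof.
case: sl2 => _ he _ hv; elim=> [|k IHk] /=; first by rewrite mulr0 addr0.
by rewrite he IHk eZ -scalerDl mulrSr; congr (_ *: _); ring.
Qed.

Lemma sl2_highest_weight v mu M : e v = 0 -> h v = mu *: v ->
  iter M f v != 0 -> iter M.+1 f v = 0 -> mu = M%:R.
Proof.
move=> ev hv nzM zM.
have raise k : e (iter k.+1 f v) = (k.+1%:R * (mu - k%:R)) *: iter k f v.
  case: sl2 => ef _ _; elim: k => [|k IHk].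
    by rewrite /= ef ev (scalable0 fZ) add0r hv mul1r subr0.
  rewrite iterS ef IHk fZ -iterS (sl2_weight_iter_f hv k.+1) -scalerDl.
  by congr (_ *: _); rewrite !mulrSr; ring.
have := raise M; rewrite zM (scalable0 eZ) => /esym/eqP.
rewrite scaler_eq0 (negbTE nzM) orbF mulf_eq0 pnatr_eq0 subr_eq0 /=.
by move/eqP.
Qed.

Lemma sl2_weight_int v lam : v != 0 -> h v = lam *: v ->
  (exists n, iter n e v = 0) -> (forall y, exists n, iter n f y = 0) ->
  exists z : int, lam = z%:~R.
Proof.
move=> vn0 hv [n env] fnil.
have [m [nzm zm]] := iter_last_neq vn0 env.
have [n' fn'] := fnil (iter m e v).
have [M [nzM zM]] := iter_last_neq nzm fn'.
have lamE := sl2_highest_weight zm (sl2_weight_iter_e hv m) nzM zM.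
by exists (M%:Z - (2 * m)%:Z); rewrite intrB -!pmulrn natrM -lamE; ring.
Qed.

End Sl2Strings.

Lemma sl2_lowest_weight_nonpos (K : numFieldType) (W : lmodType K)
    (e f h : W -> W) v lam : scalable e -> scalable f ->
  sl2_relations e f h -> v != 0 -> h v = lam *: v -> f v = 0 ->
  (exists n, iter n e v = 0) -> exists N : nat, lam = - N%:R.
Proof.
move=> eZ fZ sl2 vn0 hv fv [n env]; have [N [nzN zN]] := iter_last_neq vn0 env.
have hv' : - h v = - lam *: v by rewrite hv scaleNr.
have lamE := sl2_highest_weight fZ eZ (sl2_relations_swap eZ fZ sl2) fv hv' nzN zN.
by exists N; rewrite -lamE opprK.
Qed.

(** * Roots and the invariant form *)

Section GRLA.
Variable R : realType.
Local Notation C := R[i].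
Variables (V : lmodType C) (Hs : vectType C).
Local Notation Hd := 'Hom(Hs, C^o).
Variables (br : V -> V -> V) (bf : V -> V -> C) (iota : {linear Hs -> V})
          (t : Hd -> Hs).
Hypotheses (Hlie : lie_bracket br) (HG1 : GR1 br bf).

Lemma bfC x y : bf x y = bf y x.
Proof. by case: HG1 => _ sym _ _; apply: sym. Qed.

Lemma bf_nondeg x : (forall y, bf x y = 0) -> x = 0.
Proof. by case: HG1 => _ _ nondeg _; apply: nondeg. Qed.

Lemma bf_invariant x y z : bf (br x y) z = bf x (br y z).
Proof. by case: HG1 => _ _ _ inv; apply: inv. Qed.

Lemma bf_linearl z : linear_for *%R (bf^~ z).
Proof. by case: HG1 => bfl _ _ _ a x y; apply: bfl. Qed.

Lemma bf_linearr z : linear_for *%R (bf z).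
Proof. by move=> a x y; rewrite !(bfC z); apply: bf_linearl. Qed.

HB.instance Definition _ :=
  bilinear_isBilinear.Build C V V C *%R *%R bf (conj bf_linearl bf_linearr).

Lemma br_linearl z : linear (br^~ z).
Proof. by case: Hlie => brl _ _ a x y; apply: brl. Qed.

Lemma br_linearr z : linear (br z).
Proof.
move=> a x y; apply/subr0_eq/bf_nondeg => w.
rewrite linearBl linearDl linearZl_LR /= !bf_invariant.
by rewrite br_linearl linearDr linearZr_LR subrr.
Qed.

HB.instance Definition _ :=
  bilinear_isBilinear.Build C V V V *:%R *:%R br (conj br_linearl br_linearr).

Lemma br_scalable x : scalable (br x).
Proof. exact: linearZr_LR. Qed.

Lemma brxx x : br x x = 0.
Proof. by case: Hlie => _ alt _; apply: alt. Qed.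

Lemma brC x y : br y x = - br x y.
Proof.
have := brxx (x + y); rewrite linearDl !linearDr /= !brxx add0r addr0 => /eqP.
by rewrite addrC addr_eq0 => /eqP.
Qed.

Lemma br_derivation x y z : br x (br y z) = br (br x y) z + br y (br x z).
Proof.
case: Hlie => _ _ jacobi; have := jacobi x y z.
rewrite (brC x z) linearNr (brC (br x y) z) -addrA -opprD => /eqP.
by rewrite subr_eq0 => /eqP ->; rewrite addrC.
Qed.

Hypothesis HG2 : GR2 br iota.
Local Notation rs := (root_space br iota).
Local Notation is_root := (is_root br iota).

Lemma rsZ a c x : rs a x -> rs a (c *: x).
Proof. by move=> rx h; rewrite linearZr_LR /= rx !scalerA mulrC. Qed.

Lemma rs_br a b x y : rs a x -> rs b y -> rs (a + b) (br x y).
Proof.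
move=> rx ry h; rewrite br_derivation rx ry linearZl_LR linearZr_LR /=.
by rewrite add_lfunE scalerDl.
Qed.

Lemma rs_iota h : rs 0 (iota h).
Proof. by case: HG2 => _ _ ab _ _ h'; rewrite ab zero_lfunE scale0r. Qed.

Lemma rs0_iota x : rs 0 x -> exists h, x = iota h.
Proof.
case: HG2 => _ _ _ selfc _ rx; apply: selfc => h.
by rewrite rx zero_lfunE scale0r.
Qed.

Lemma iota_inj : injective iota.
Proof. by case: HG2. Qed.

Lemma root_space_decomp x : exists s : seq (Hd * V),
  (forall p, p \in s -> rs p.1 p.2) /\ x = \sum_(p <- s) p.2.
Proof. by case: HG2 => _ _ _ _ decomp; apply: decomp. Qed.

Lemma rs_orth a b x y : rs a x -> rs b y -> a + b != 0 -> bf x y = 0.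
Proof.
move=> rx ry /lfun_neq0 [h]; rewrite add_lfunE => abh.
have : bf (br x (iota h)) y = b h * bf x y by rewrite bf_invariant ry linearZr_LR.
rewrite brC rx linearNl linearZl_LR /= => /eqP; rewrite eq_sym -subr_eq0 opprK.
by rewrite -mulrDl mulf_eq0 addrC (negbTE abh) => /eqP.
Qed.

Lemma form_iota_nondeg h : (forall h', bf (iota h) (iota h') = 0) -> h = 0.
Proof.
move=> horth; apply: iota_inj; rewrite linear0; apply: bf_nondeg => y.
have [s [rs_s ->]] := root_space_decomp y; rewrite linear_sumr big1_seq //=.
move=> p ps; case: (eqVneq p.1 0) => [p0|pn0].
  by have := rs_s _ ps; rewrite p0 => /rs0_iota [h' ->]; apply: horth.
by apply: (rs_orth (rs_iota h) (rs_s _ ps)); rewrite add0r.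
Qed.

Hypothesis Ht : is_t bf iota t.
Local Notation fH := (fH bf iota t).

Lemma t_linear : linear t.
Proof.
move=> c a b; apply/subr0_eq/form_iota_nondeg => h.
rewrite !linearB linearD linearZ /= linearBl linearDl linearZl_LR /= !Ht.
by rewrite add_lfunE scale_lfunE subrr.
Qed.

HB.instance Definition _ := GRing.isLinear.Build C Hd Hs *:%R t t_linear.

Lemma fHE a b : fH a b = a (t b).
Proof. exact: Ht. Qed.

Lemma fHC a b : fH a b = fH b a.
Proof. exact: bfC. Qed.

Lemma fH_linearl c : linear_for *%R (fH^~ c).
Proof. by move=> k a b; rewrite !fHE add_lfunE scale_lfunE. Qed.

Lemma fH_linearr c : linear_for *%R (fH c).
Proof. by move=> k a b; rewrite !(fHC c) fH_linearl. Qed.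

HB.instance Definition _ :=
  bilinear_isBilinear.Build C Hd Hd C *%R *%R fH (conj fH_linearl fH_linearr).

Lemma br_opposite a x y : rs a x -> rs (- a) y -> br x y = iota (bf x y *: t a).
Proof.
move=> rx ry; have := rs_br rx ry; rewrite addrN => /rs0_iota [h0 xyE].
rewrite xyE; apply: congr1; apply/subr0_eq/form_iota_nondeg => h.
rewrite linearB linearZ /= linearBl linearZl_LR /= Ht -xyE bf_invariant brC ry.
by rewrite linearNr linearZr_LR opp_lfunE /=; ring.
Qed.

Lemma opposite_dual a x : rs a x -> x != 0 -> exists y, rs (- a) y /\ bf x y = 1.
Proof.
move=> rx xn0.
have [z xz] : exists z, bf x z != 0.
  apply: NNPP => xorth; move/eqP: xn0; apply; apply: bf_nondeg => z.
  by apply/eqP/negPn/negP => xz; apply: xorth; exists z.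
have [s [rs_s zE]] := root_space_decomp z.
have [p ps xp] : exists2 p, p \in s & bf x p.2 != 0.
  apply/hasP; apply: contraNT xz => /hasPn xs.
  by rewrite zE linear_sumr big1_seq // => p /andP [_ /xs /negPn/eqP].
have p1E : p.1 = - a.
  apply/eqP; rewrite -addr_eq0 addrC; apply: contraNT xp => ap.
  by apply/eqP; apply: rs_orth rx (rs_s _ ps) ap.
exists ((bf x p.2)^-1 *: p.2); split; first by apply: rsZ; rewrite -p1E; apply: rs_s.
by rewrite linearZr_LR /= mulVf.
Qed.

Lemma rootN a : is_root a -> is_root (- a).
Proof.
case=> x [rx /eqP xn0]; have [y [ry xy]] := opposite_dual rx xn0.
by exists y; split=> // y0; move: xy; rewrite y0 linear0r => /eqP; rewrite eq_sym oner_eq0.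
Qed.

Local Notation Rx := (Rx br bf iota t).

Lemma RxN a : Rx a -> Rx (- a).
Proof. by case=> ra aa; split; [apply: rootN | rewrite linearNl linearNr opprK]. Qed.

Lemma Rx_norm_neq0 a : Rx a -> fH a a != 0.
Proof. by case=> _ /eqP. Qed.

(** * Cartan integers *)

Definition coroot a := (2%:R / fH a a) *: t a.
Definition cartan b a := 2%:R * fH b a / fH a a.

Lemma coroot_weight a b v : rs b v -> br (iota (coroot a)) v = cartan b a *: v.
Proof. by move=> rv; rewrite rv linearZ /= -fHE /cartan mulrAC. Qed.

Lemma sl2_triple a : Rx a -> exists e f, [/\ rs a e, rs (- a) f, e != 0 &
  sl2_relations (br e) (br f) (br (iota (coroot a)))].
Proof.
move=> Ra; case: (Ra) => [[e [re /eqP en0]] _].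
have [f [rf ef]] := opposite_dual re en0.
have aa : a (coroot a) = 2%:R.
  by rewrite linearZ /= -fHE -[_ *: _]/(_ * _) divfK ?Rx_norm_neq0.
pose f' := (2%:R / fH a a) *: f.
have rf' : rs (- a) f' by apply: rsZ.
have ef' : bf e f' = 2%:R / fH a a by rewrite linearZr_LR /= ef mulr1.
exists e, f'; split=> //; split=> x; rewrite br_derivation.
- by rewrite (br_opposite re rf') ef' addrC.
- by rewrite re aa linearZl_LR addrC.
- by rewrite rf' opp_lfunE aa linearZl_LR /= scaleNr addrC.
Qed.

Lemma cartanK a b : Rx a -> cartan b a * fH a a = 2%:R * fH b a.
Proof. by move=> Ra; rewrite divfK ?Rx_norm_neq0. Qed.

Hypothesis HG3 : GR3 br bf iota t.

Lemma cartan_int a b : Rx a -> is_root b -> exists n : int, cartan b a = n%:~R.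
Proof.
move=> Ra [v [rv /eqP vn0]]; have [e [f [re rf en0 sl2]]] := sl2_triple Ra.
exact: (sl2_weight_int (br_scalable e) (br_scalable f) sl2 vn0 (coroot_weight a rv)
  (HG3 Ra re v) (HG3 (RxN Ra) rf)).
Qed.

Lemma root_sub a b : Rx a -> is_root b ->
  (forall N : nat, cartan b a != - N%:R) -> is_root (b - a).
Proof.
move=> Ra [v [rv /eqP vn0]] notlow; have [e [f [re rf en0 sl2]]] := sl2_triple Ra.
case: (eqVneq (br f v) 0) => [fv|fvn0].
  have [N] := sl2_lowest_weight_nonpos (br_scalable e) (br_scalable f) sl2 vn0
    (coroot_weight a rv) fv (HG3 Ra re v).
  by move/eqP; rewrite (negbTE (notlow N)).
by exists (br f v); split; [rewrite addrC; apply: rs_br | apply/eqP].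
Qed.

(** * Isotropic roots *)

Section IsotropicString.
Variables (d b : Hd) (x y : V).
Hypotheses (rx : rs d x) (xn0 : x != 0) (ry : rs (- d) y) (xy : br x y = iota (t d)).
Hypotheses (dd : fH d d = 0) (db : fH d b != 0).

Let string (j : int) := b + j%:~R *: d.

Lemma string_weight j w : rs (string j) w -> br (iota (t d)) w = fH d b *: w.
Proof.
by move=> rw; rewrite rw add_lfunE scale_lfunE -!fHE dd scaler0 addr0 fHC.
Qed.

Lemma string_succ j w : rs (string j) w -> rs (string (j + 1)) (br x w).
Proof.
move=> rw; suff -> : string (j + 1) = d + string j by apply: rs_br.
by rewrite /string intrD mulr1z scalerDl scale1r addrA addrC.
Qed.

Lemma string_pred j w : rs (string j) w -> rs (string (j - 1)) (br y w).
Proof.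
move=> rw; suff -> : string (j - 1) = - d + string j by apply: rs_br.
by rewrite /string intrB mulr1z scalerBl scale1r addrA addrC.
Qed.

Lemma string_iter n j w : rs (string j) w -> rs (string (j + n%:Z)) (iter n (br x) w).
Proof.
elim: n j w => [|n IHn] j w rw; first by rewrite addr0.
by rewrite iterS -addn1 PoszD addrA; apply/string_succ/IHn.
Qed.

(* [x, y] = t_d acts on the whole d-string through b by the scalar (d, b) *)
Lemma iter_br_pred n j w : rs (string j) w ->
  iter n.+1 (br x) (br y w) =
  br y (iter n.+1 (br x) w) + (n.+1%:R * fH d b) *: iter n (br x) w.
Proof.
move=> rw; elim: n => [|n IHn].
  by rewrite /= br_derivation xy mul1r addrC (string_weight rw).
rewrite iterS IHn linearDr linearZr_LR /= br_derivation xy.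
rewrite (string_weight (string_iter n.+1 rw)) -!iterS addrAC -scalerDl addrC.
by rewrite [n.+2%:R]mulrSr mulrDl mul1r [fH d b + _]addrC.
Qed.

Lemma string_norm j : fH (string j) (string j) = fH b b + 2%:R * j%:~R * fH d b.
Proof.
by rewrite /string linearDl !linearDr !linearZl_LR !linearZr_LR /= dd [fH b d]fHC; ring.
Qed.

Lemma string_norm_bound j : is_root (string j) ->
  exists r : R, -1 <= r <= 1 /\ fH (string j) (string j) = 2%:R * fH d b * r%:C.
Proof.
move=> rj; case: (eqVneq (fH (string j) (string j)) 0) => [->|jj].
  by exists 0; rewrite rmorph0 mulr0 lerN10 ler01.
have Rj : Rx (string j) by split=> //; apply/eqP.
have [n cn] := cartan_int Rj (ex_intro _ x (conj rx (elimN eqP xn0))).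
have dj : fH d (string j) = fH d b by rewrite linearDr linearZr_LR /= dd mulr0 addr0.
have nN : n%:~R * fH (string j) (string j) = 2%:R * fH d b by rewrite -cn cartanK // dj.
have nn0 : n != 0.
  apply: contraNneq db => n0; move: nN; rewrite n0 mulr0z mul0r => /esym/eqP.
  by rewrite mulf_eq0 pnatr_eq0.
exists (n%:~R)^-1; split; first exact: intr_inv_bound.
by rewrite fmorphV rmorph_int -nN [n%:~R * _]mulrC mulfK // intr_eq0.
Qed.

(* consecutive norms along the string differ by 2 (d, b), yet all of them lie in
   2 (d, b) [-1, 1] *)
Lemma string_gap j : is_root (string j) -> is_root (string (j + 3)) -> False.
Proof.
move=> rj rj3; have [r1 [/andP [r1lo r1hi] e1]] := string_norm_bound rj.
have [r2 [/andP [r2lo r2hi] e2]] := string_norm_bound rj3.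
have c2 : 2%:R * fH d b != 0 by rewrite mulf_neq0 ?pnatr_eq0.
have : (2%:R * fH d b) * (r2 - r1)%:C = (2%:R * fH d b) * 3%:R.
  by rewrite rmorphB mulrBr -e1 -e2 !string_norm intrD; ring.
move/(mulfI c2); rewrite -(rmorph_nat (real_complex R)) => /complexI r21.
lra.
Qed.

Lemma string_iter3 j w : rs (string j) w -> iter 3 (br x) w = 0.
Proof.
move=> rw; case: (eqVneq (iter 3 (br x) w) 0) => // w3; exfalso.
have wn0 : w != 0 by apply: contraNneq w3 => ->; rewrite /= !linear0r.
apply: (@string_gap j); first by exists w; split=> //; apply/eqP.
by exists (iter 3 (br x) w); split; [apply: string_iter | apply/eqP].
Qed.

Lemma string_iter_vanish n :
  (forall j w, rs (string j) w -> iter n.+1 (br x) w = 0) ->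
  forall j w, rs (string j) w -> iter n (br x) w = 0.
Proof.
move=> vanish j w rw; have := iter_br_pred n rw.
rewrite (vanish _ _ (string_pred rw)) (vanish _ _ rw) linear0r add0r => /esym/eqP.
by rewrite scaler_eq0 mulf_eq0 pnatr_eq0 (negbTE db) /= => /eqP.
Qed.

End IsotropicString.

Lemma isotropic_root_orth d b : is_root d -> fH d d = 0 -> is_root b -> fH d b = 0.
Proof.
move=> [x [rx /eqP xn0]] dd [v [rv vn0]]; apply/eqP/negPn/negP => db.
have [y [ry xy1]] := opposite_dual rx xn0.
have xy : br x y = iota (t d) by rewrite (br_opposite rx ry) xy1 scale1r.
have vanish := string_iter_vanish rx ry xy dd db.
have rv0 : rs (b + 0%:~R *: d) v by rewrite mulr0z scale0r addr0.
by apply: vn0; exact: (vanish _ (vanish _ (vanish _ (string_iter3 rx xn0 dd db)))) _ _ rv0.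
Qed.

Local Notation rspan := (@rspan R Hs).
Local Notation cspan := (cspan t).

Lemma rspan_ind (P Q : Hd -> Prop) : Q 0 -> (forall u v, Q u -> Q v -> Q (u + v)) ->
  (forall (r : R) a, P a -> Q (r%:C *: a)) -> forall v, rspan P v -> Q v.
Proof.
move=> Q0 QD QZ v [s [Ps ->]]; elim: s Ps => [|p s IHs] Ps; first by rewrite big_nil.
rewrite big_cons; apply: QD; first by apply/QZ/Ps; rewrite mem_head.
by apply: IHs => q qs; apply: Ps; rewrite in_cons qs orbT.
Qed.

Lemma rspan0 P : rspan P 0.
Proof. by exists [::]; rewrite big_nil. Qed.

Lemma rspanD P u v : rspan P u -> rspan P v -> rspan P (u + v).
Proof.
case=> [s1 [P1 ->]] [s2 [P2 ->]]; exists (s1 ++ s2); rewrite big_cat; split=> // p.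
by rewrite mem_cat => /orP [] ?; [apply: P1 | apply: P2].
Qed.

Lemma rspanZ P (r : R) u : rspan P u -> rspan P (r%:C *: u).
Proof.
case=> [s [Ps ->]]; exists [seq (r * p.1, p.2) | p <- s]; split.
  by move=> p /mapP [q qs ->]; exact: Ps q qs.
by rewrite big_map scaler_sumr; apply: eq_bigr => p _; rewrite rmorphM scalerA.
Qed.

Lemma rspanN P u : rspan P u -> rspan P (- u).
Proof. by rewrite -scaleN1r -(rmorphN1 (real_complex R)); apply: rspanZ. Qed.

Lemma rspan_mem (P : Hd -> Prop) a : P a -> rspan P a.
Proof.
move=> Pa; exists [:: (1, a)]; rewrite big_seq1 rmorph1 scale1r.
by split=> // p; rewrite inE => /eqP ->.
Qed.

Lemma rspan_sum P I (r : seq I) (F : I -> Hd) :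
  (forall i, rspan P (F i)) -> rspan P (\sum_(i <- r) F i).
Proof.
move=> PF; elim: r => [|x r IHr]; first by rewrite big_nil; apply: rspan0.
by rewrite big_cons; apply: rspanD.
Qed.

Lemma cspan_ind (P : Hd -> Prop) (Q : Hs -> Prop) : Q 0 ->
  (forall u v, Q u -> Q v -> Q (u + v)) ->
  (forall c a, P a -> Q (c *: t a)) -> forall h, cspan P h -> Q h.
Proof.
move=> Q0 QD QZ v [s [Ps ->]]; elim: s Ps => [|p s IHs] Ps; first by rewrite big_nil.
rewrite big_cons; apply: QD; first by apply/QZ/Ps; rewrite mem_head.
by apply: IHs => q qs; apply: Ps; rewrite in_cons qs orbT.
Qed.

Lemma cspan0 P : cspan P 0.
Proof. by exists [::]; rewrite big_nil. Qed.

Lemma cspanD P u v : cspan P u -> cspan P v -> cspan P (u + v).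
Proof.
case=> [s1 [P1 ->]] [s2 [P2 ->]]; exists (s1 ++ s2); rewrite big_cat; split=> // p.
by rewrite mem_cat => /orP [] ?; [apply: P1 | apply: P2].
Qed.

Lemma cspanZ P c u : cspan P u -> cspan P (c *: u).
Proof.
case=> [s [Ps ->]]; exists [seq (c * p.1, p.2) | p <- s]; split.
  by move=> p /mapP [q qs ->]; exact: Ps q qs.
by rewrite big_map scaler_sumr; apply: eq_bigr => p _; rewrite scalerA.
Qed.

Lemma cspanN P u : cspan P u -> cspan P (- u).
Proof. by rewrite -scaleN1r; apply: cspanZ. Qed.

Lemma cspan_mem (P : Hd -> Prop) a : P a -> cspan P (t a).
Proof.
move=> Pa; exists [:: (1, a)]; rewrite big_seq1 scale1r.
by split=> // p; rewrite inE => /eqP ->.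
Qed.

Lemma cspan_sum P I (r : seq I) (F : I -> Hs) :
  (forall i, cspan P (F i)) -> cspan P (\sum_(i <- r) F i).
Proof.
move=> PF; elim: r => [|x r IHr]; first by rewrite big_nil; apply: cspan0.
by rewrite big_cons; apply: cspanD.
Qed.

Local Notation Vsp := (Vsp br iota).
Local Notation V0 := (V0 br bf iota t).

Lemma root_Vsp a : is_root a -> Vsp a.
Proof. exact: rspan_mem. Qed.

Lemma V0_orthl v w : V0 v -> Vsp w -> fH w v = 0.
Proof. by case=> _ vorth wV; rewrite fHC vorth. Qed.

Lemma V0_0 : V0 0.
Proof. by split=> [|w _]; [apply: rspan0 | rewrite linear0l]. Qed.

Lemma V0D u v : V0 u -> V0 v -> V0 (u + v).
Proof.
case=> Vu uorth [Vv vorth]; split=> [|w Vw]; first exact: rspanD.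
by rewrite linearDl /= uorth // vorth // addr0.
Qed.

Lemma V0N u : V0 u -> V0 (- u).
Proof.
case=> Vu uorth; split=> [|w Vw]; first exact: rspanN.
by rewrite linearNl /= uorth // oppr0.
Qed.

Lemma Vsp_orth v : (forall b, is_root b -> fH v b = 0) -> forall w, Vsp w -> fH v w = 0.
Proof.
move=> vorth; apply: (rspan_ind (Q := fun w => fH v w = 0)) => [|u w uo wo|r a Ra].
- exact: linear0r.
- by rewrite linearDr /= uo wo addr0.
- by rewrite linearZr_LR /= vorth // mulr0.
Qed.

Lemma isotropic_V0 d : is_root d -> fH d d = 0 -> V0 d.
Proof.
move=> Rd dd; split; first exact: root_Vsp.
by apply: Vsp_orth => b; apply: isotropic_root_orth.
Qed.

(** * Classes of roots and their bases *)

Variables (k : nat) (cls : 'I_k -> Hd -> Prop) (ell : 'I_k -> nat)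
  (al : forall i : 'I_k, 'I_(ell i) -> Hd).
Arguments al : clear implicits.
Hypotheses (Hpart : root_partition br bf iota t cls)
  (Hbase : forall i, is_base br bf iota t (cls i) (al i)).

Local Notation zcomb i z := (\sum_j ((z j)%:~R *: al i j)).

Lemma cls_Rx i a : cls i a -> Rx a.
Proof. by case: Hpart => _ clsRx _ _ _; apply: clsRx. Qed.

Lemma cls_exists a : Rx a -> exists i, cls i a.
Proof. by case: Hpart => _ _ clsT _ _; apply: clsT. Qed.

Lemma cls_equiv i a b : cls i a -> cls i b -> rootequiv br bf iota t a b.
Proof. by case: Hpart => _ _ _ clsE _ ia; case: (clsE i a b ia). Qed.

Lemma cls_step i a b : cls i a -> Rx b -> fH a b != 0 -> cls i b.
Proof.
case: Hpart => _ _ _ clsE _ ia Rb ab; have [_] := clsE i a b ia; apply.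
by apply: rt_step; split=> //; [apply: cls_Rx ia | apply/eqP].
Qed.

Lemma cls_orth i j a b : cls i a -> cls j b -> i != j -> fH a b = 0.
Proof.
move=> ia jb; apply: contraNeq => ab; apply/eqP.
by case: Hpart => _ _ _ _ clsU; apply: clsU (cls_step ia (cls_Rx jb) ab) jb.
Qed.

Lemma al_cls i j : cls i (al i j).
Proof. by case: (Hbase i). Qed.

Lemma al_root i j : is_root (al i j).
Proof. by case: (cls_Rx (al_cls j)). Qed.

Lemma base_indep i (r : 'I_(ell i) -> R) :
  V0 (\sum_j (r j)%:C *: al i j) -> forall j, r j = 0.
Proof. by case: (Hbase i) => _ indep _; apply: indep. Qed.

Lemma base_expansion i b : cls i b -> exists z : 'I_(ell i) -> int,
  ((forall j, 0 <= z j) \/ (forall j, z j <= 0)) /\ V0 (b - zcomb i z).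
Proof. by case: (Hbase i) => _ _ expand; apply: expand. Qed.

Lemma norm_ratio_rel a b : rootrel br bf iota t a b ->
  exists r : R, fH b b = r%:C * fH a a.
Proof.
case=> Ra Rb /eqP ab; have [n1 c1] := cartan_int Ra (proj1 Rb).
have [n2 c2] := cartan_int Rb (proj1 Ra).
have e1 := cartanK b Ra; have e2 := cartanK a Rb; rewrite c1 in e1; rewrite c2 in e2.
have n2n0 : (n2%:~R : C) != 0.
  apply: contra_neq ab => n20; move: e2; rewrite n20 mul0r => /esym/eqP.
  by rewrite mulf_eq0 pnatr_eq0 => /eqP.
exists (n1%:~R / n2%:~R); rewrite rmorphM fmorphV /= !rmorph_int.
by apply: (mulfI n2n0); rewrite e2 fHC -e1; field.
Qed.

Lemma norm_ratio a b : rootequiv br bf iota t a b -> Rx a ->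
  Rx b /\ exists r : R, fH b b = r%:C * fH a a.
Proof.
elim=> {a b} [a b ab _ | a Ra | a b c _ IHab _ IHbc Ra].
- by split; [case: ab | apply: norm_ratio_rel].
- by split=> //; exists 1; rewrite rmorph1 mul1r.
- have [Rb [r1 e1]] := IHab Ra; have [Rc [r2 e2]] := IHbc Rb.
  by split=> //; exists (r2 * r1); rewrite e2 e1 rmorphM mulrA.
Qed.

Lemma cls_form_real i a0 a b : cls i a0 -> cls i a -> cls i b ->
  exists r : R, fH a b = r%:C * fH a0 a0.
Proof.
move=> ia0 ia ib; have [_ [r1 e1]] := norm_ratio (cls_equiv ia0 ia) (cls_Rx ia0).
have [n cn] := cartan_int (cls_Rx ia) (proj1 (cls_Rx ib)).
have := cartanK b (cls_Rx ia); rewrite cn fHC e1 => e.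
exists (n%:~R / 2%:R * r1); rewrite !rmorphM fmorphV /= rmorph_int rmorph_nat.
by apply: (@mulfI _ 2%:R); rewrite ?pnatr_eq0 // -e; field.
Qed.

Lemma al_Vsp i j : Vsp (al i j).
Proof. exact/root_Vsp/al_root. Qed.

Lemma rcomb_Vsp i (r : 'I_(ell i) -> R) : Vsp (\sum_j (r j)%:C *: al i j).
Proof. by apply: rspan_sum => j; apply/rspanZ/al_Vsp. Qed.

Lemma V0_zcomb_norm i c z : is_root c -> V0 (c - zcomb i z) ->
  fH c c = \sum_j (z j)%:~R * fH c (al i j).
Proof.
move=> Rc cz; rewrite -{2}(subrK (zcomb i z) c) linearDr /= (V0_orthl cz (root_Vsp Rc)).
by rewrite add0r linear_sumr; apply: eq_bigr => j _; rewrite linearZr_LR.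
Qed.

Lemma V0_of_base_orth i (r : 'I_(ell i) -> R) :
  (forall j', fH (\sum_j (r j)%:C *: al i j) (al i j') = 0) ->
  V0 (\sum_j (r j)%:C *: al i j).
Proof.
move=> orth; split; first exact: rcomb_Vsp.
apply: Vsp_orth => b Rb.
have vsum : fH (\sum_j (r j)%:C *: al i j) b = \sum_j (r j)%:C * fH (al i j) b.
  by rewrite linear_sumlz; apply: eq_bigr => j _; rewrite linearZl_LR.
case: (eqVneq (fH b b) 0) => [bb|bn0].
  by rewrite vsum big1 // => j _; rewrite fHC (isotropic_root_orth Rb bb (al_root j)) mulr0.
have [i' i'b] := cls_exists (conj Rb (elimN eqP bn0)).
case: (eqVneq i' i) => [i'E|i'i]; last first.
  by rewrite vsum big1 // => j _; rewrite (cls_orth (al_cls j) i'b) ?mulr0 // eq_sym.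
rewrite i'E in i'b; have [z [_ bz]] := base_expansion i'b.
rewrite -(subrK (zcomb i z) b) linearDr /= (V0_orthl bz (rcomb_Vsp r)) add0r.
by rewrite linear_sumr big1 // => j _; rewrite linearZr_LR /= orth mulr0.
Qed.

Lemma base_span_nondeg i (a : 'I_(ell i) -> C) :
  (forall j', fH (\sum_j a j *: al i j) (al i j') = 0) -> forall j, a j = 0.
Proof.
move=> orth j0; pose N0 := fH (al i j0) (al i j0).
have N0n0 : N0 != 0 by apply/Rx_norm_neq0/cls_Rx/al_cls.
have /fin_all_exists [q qE] : forall j, exists qj : 'I_(ell i) -> R,
    forall j', fH (al i j) (al i j') = (qj j')%:C * N0.
  move=> j; have /fin_all_exists // : forall j', exists r : R,
      fH (al i j) (al i j') = r%:C * N0.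
  by move=> j'; apply: cls_form_real; apply: al_cls.
apply: (real_indep_complex (q := q)) => [r rq|m].
  apply: base_indep; apply: V0_of_base_orth => m.
  rewrite linear_sumlz (eq_bigr (fun j => (r j * q j m)%:C * N0)) => [|j _].
    by rewrite -mulr_suml -rmorph_sum /= rq rmorph0 mul0r.
  by rewrite linearZl_LR /= qE rmorphM mulrA.
apply: (mulIf N0n0); rewrite mul0r -[RHS](orth m) linear_sumlz mulr_suml.
by apply: eq_bigr => j _; rewrite linearZl_LR /= qE mulrA.
Qed.

(** * The decomposition of H(R) *)

Local Notation dotR i := (dotR br bf iota t (cls i) (al i)).
Local Notation dotH i := (dotH br bf iota t (cls i) (al i)).
Local Notation HR := (HR br iota t).
Local Notation H0R := (H0R br bf iota t).
Local Notation R0 := (R0 br bf iota t).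

Lemma dotR_span i b : dotR i b -> exists a : 'I_(ell i) -> C, b = \sum_j a j *: al i j.
Proof.
case=> + _; apply: (rspan_ind (Q := fun b => exists a, b = \sum_j a j *: al i j)).
- by exists (fun=> 0); rewrite big1 // => j _; rewrite scale0r.
- move=> u v [a1 ->] [a2 ->]; exists (fun j => a1 j + a2 j).
  by rewrite -big_split; apply: eq_bigr => j _; rewrite scalerDl.
- move=> r _ [j ->]; exists (fun j' => (j' == j)%:R * r%:C).
  rewrite (bigD1 j) //= eqxx mul1r big1 ?addr0 // => j' /negbTE ->.
  by rewrite mul0r scale0r.
Qed.

Lemma dotH_span i h : dotH i h -> exists a : 'I_(ell i) -> C, h = t (\sum_j a j *: al i j).
Proof.
apply: (cspan_ind (Q := fun h => exists a, h = t (\sum_j a j *: al i j))).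
- by exists (fun=> 0); rewrite big1 ?linear0 // => j _; rewrite scale0r.
- move=> u v [a1 ->] [a2 ->]; exists (fun j => a1 j + a2 j).
  by rewrite -linearD -big_split; apply/congr1/eq_bigr => j _; rewrite scalerDl.
- move=> c b /dotR_span [a ->]; exists (fun j => c * a j).
  by rewrite -linearZ scaler_sumr; apply/congr1/eq_bigr => j _; rewrite scalerA.
Qed.

Lemma al_dotR i j : dotR i (al i j).
Proof.
split; first by apply: rspan_mem; exists j.
by right; exists (al i j); split; [apply: al_cls | rewrite subrr; apply: V0_0].
Qed.

Lemma dotH_comb i (a : 'I_(ell i) -> C) : dotH i (t (\sum_j a j *: al i j)).
Proof.
by rewrite linear_sum; apply: cspan_sum => j; rewrite linearZ; apply/cspanZ/cspan_mem/al_dotR.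
Qed.

Lemma dotH_HR i h : dotH i h -> HR h.
Proof.
case/dotH_span => a ->; rewrite linear_sum; apply: cspan_sum => j.
by rewrite linearZ; apply/cspanZ/cspan_mem/al_root.
Qed.

Lemma dotH_form_nondeg i h : dotH i h ->
  (forall h', dotH i h' -> bf (iota h) (iota h') = 0) -> h = 0.
Proof.
case/dotH_span => a -> orth.
have a0 := base_span_nondeg (fun j' => orth _ (cspan_mem (al_dotR j'))).
by rewrite big1 ?linear0 // => j _; rewrite a0 scale0r.
Qed.

Lemma dotH_orth i i' x y : i' != i -> dotH i' x -> dotH i y -> bf (iota x) (iota y) = 0.
Proof.
move=> i'i /dotH_span [a ->] /dotH_span [b ->].
rewrite -/(fH _ _) linear_sumlz big1 // => j _; rewrite linear_sumr big1 // => j' _.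
rewrite linearZl_LR linearZr_LR /=.
by have /= -> := cls_orth (al_cls j) (al_cls j') i'i; rewrite !mulr0.
Qed.

Lemma HR_orth h : (forall b, is_root b -> bf (iota h) (iota (t b)) = 0) ->
  forall h', HR h' -> bf (iota h) (iota h') = 0.
Proof.
move=> horth; apply: (cspan_ind (Q := fun h' => bf (iota h) (iota h') = 0)).
- by rewrite linear0 linear0r.
- by move=> u v uo vo; rewrite linearD linearDr /= uo vo addr0.
- by move=> c a Ra; rewrite linearZ linearZr_LR /= horth // mulr0.
Qed.

Lemma H0R_0 : H0R 0.
Proof. by split=> [|h' _]; [apply: cspan0 | rewrite linear0 linear0l]. Qed.

Lemma H0RD u v : H0R u -> H0R v -> H0R (u + v).
Proof.
case=> HRu uo [HRv vo]; split=> [|h' HRh']; first exact: cspanD.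
by rewrite linearD linearDl /= uo // vo // addr0.
Qed.

Lemma H0RZ c u : H0R u -> H0R (c *: u).
Proof.
case=> HRu uo; split=> [|h' HRh']; first exact: cspanZ.
by rewrite linearZ linearZl_LR /= uo // mulr0.
Qed.

Lemma V0_H0R v : V0 v -> H0R (t v).
Proof.
case=> Vv vo; split.
  apply: (rspan_ind (Q := fun v => HR (t v))) Vv => [|u w|r a Ra].
  - by rewrite linear0; apply: cspan0.
  - by rewrite linearD; apply: cspanD.
  - by rewrite linearZ; apply/cspanZ/cspan_mem.
by apply: HR_orth => b Rb; apply: vo; apply: root_Vsp.
Qed.

Lemma cspan_R0_H0R h : cspan R0 h -> H0R h.
Proof.
apply: cspan_ind => [|u v|c d [Rd dd]]; [exact: H0R_0 | exact: H0RD |].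
exact/H0RZ/V0_H0R/isotropic_V0.
Qed.

Lemma HR_direct h0 (hs : 'I_k -> Hs) : H0R h0 -> (forall i, dotH i (hs i)) ->
  h0 + \sum_i hs i = 0 -> h0 = 0 /\ (forall i, hs i = 0).
Proof.
move=> [_ h0o] dhs sum0.
have hs0 i : hs i = 0.
  apply: (dotH_form_nondeg (dhs i)) => h' dh'.
  have := congr1 (fun h => bf (iota h) (iota h')) sum0.
  rewrite /= linear0 linear0l linearD linearDl /= (h0o _ (dotH_HR dh')) add0r.
  rewrite linear_sum linear_sumlz (bigD1 i) //= big1 ?addr0 // => i' i'i.
  exact: dotH_orth (dhs i') dh'.
by split=> //; move: sum0; rewrite big1 ?addr0.
Qed.

Lemma base_indep_int i (z : 'I_(ell i) -> int) : V0 (zcomb i z) -> forall j, z j = 0.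
Proof.
move=> V0z j; apply/eqP; rewrite -(intr_eq0 R); apply/eqP.
apply: (base_indep (r := fun j => (z j)%:~R)).
by under eq_bigr do rewrite /= rmorph_int.
Qed.

Lemma cls_of_V0_zcomb i c z : Rx c -> V0 (c - zcomb i z) -> cls i c.
Proof.
move=> Rc cz; case: (pickP (fun j => fH c (al i j) != 0)) => [j cj|none].
  by apply: cls_step (al_cls j) Rc _; rewrite fHC.
have := Rx_norm_neq0 Rc; rewrite (V0_zcomb_norm (proj1 Rc) cz) big1 ?eqxx // => j _.
by move/negbFE/eqP: (none j) => ->; rewrite mulr0.
Qed.

(* (b, b) = sum_j z_j (b, al_j) forces sum_j z_j <al_j, b> = 2, so some base root with
   z_j > 0 has a positive Cartan integer against b *)
Lemma height_step i b (z : 'I_(ell i) -> int) : cls i b -> (forall j, 0 <= z j) ->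
  V0 (b - zcomb i z) -> exists2 j, 0 < z j & is_root (b - al i j).
Proof.
move=> ib zpos bz; have Rb := cls_Rx ib.
have /fin_all_exists [n cn] : forall j, exists n : int, cartan (al i j) b = n%:~R.
  by move=> j; apply: cartan_int Rb (al_root j).
have sum2 : \sum_j z j * n j = 2.
  apply: (@intr_inj C); apply: (mulIf (Rx_norm_neq0 Rb)).
  rewrite {2}(V0_zcomb_norm (proj1 Rb) bz) mulr_sumr rmorph_sum mulr_suml /=.
  by apply: eq_bigr => j _; rewrite intrM -mulrA -cn cartanK // fHC mulrCA.
case: (pickP (fun j => (0 < z j) && (0 < n j))) => [j /andP [zj nj]|none].
  exists j => //; rewrite -opprB; apply/rootN/(root_sub Rb (al_root j)) => N.
  by rewrite cn; apply/eqP => nN; move: nj; rewrite -(ltr0z C) nN oppr_gt0 le_gtF ?ler0n.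
suff : \sum_j z j * n j <= 0 by rewrite sum2.
apply: sumr_le0 => j _; have := none j; case: (ltrP 0 (z j)) => [zj|zj0] /=.
  by move/negbT; rewrite -leNgt; apply: mulr_ge0_le0 (ltW zj).
have -> : z j = 0 by apply/eqP; rewrite eq_le zj0 zpos.
by rewrite mul0r.
Qed.

(* induction on the height sum_j z_j, peeling off one base root at a time until
   the remainder is an isotropic root *)
Lemma V0_remainder_R0 i n : forall b (z : 'I_(ell i) -> int), cls i b ->
  (forall j, 0 <= z j) -> \sum_j z j = n%:Z -> V0 (b - zcomb i z) ->
  cspan R0 (t (b - zcomb i z)).
Proof.
elim: n => [|n IHn] b z ib zpos zsum bz; have [j zj Rbj] := height_step ib zpos bz.
  have : z j <= \sum_j z j by rewrite (bigD1 j) //= lerDl sumr_ge0.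
  by rewrite zsum leNgt zj.
pose z' := decr_at z j; have z'pos := decr_at_ge0 zpos zj.
have bE : b - zcomb i z = (b - al i j) - zcomb i z'.
  by rewrite zcomb_decr_at opprB addrA subrK.
rewrite bE in bz *.
case: (eqVneq (fH (b - al i j) (b - al i j)) 0) => [bb|bn0]; last first.
  apply: (IHn _ z' _ z'pos _ bz); last by rewrite decr_at_sum zsum -addn1 PoszD addrK.
  exact: cls_of_V0_zcomb (conj Rbj (elimN eqP bn0)) bz.
have : V0 (zcomb i z').
  by rewrite -(subKr (b - al i j) (zcomb i z')); apply: V0D (isotropic_V0 Rbj bb) (V0N bz).
move/base_indep_int => z'0; rewrite big1 => [|j' _]; last by rewrite z'0 mulr0z scale0r.
by rewrite subr0; apply: cspan_mem.
Qed.

Lemma cls_remainder_R0 i b : cls i b ->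
  exists z : 'I_(ell i) -> int, cspan R0 (t (b - zcomb i z)).
Proof.
move=> ib; have [z [[zpos|zneg] bz]] := base_expansion ib.
  have : 0 <= \sum_j z j by apply: sumr_ge0.
  by case E : (\sum_j z j) => [n|//] _; exists z; apply: V0_remainder_R0 ib zpos E bz.
have ib' : cls i (- b).
  apply: (cls_step ib (RxN (cls_Rx ib))).
  by rewrite linearNr oppr_eq0 (Rx_norm_neq0 (cls_Rx ib)).
have nzpos j : 0 <= - z j by rewrite oppr_ge0.
have nbE : - b - zcomb i (fun j => - z j) = - (b - zcomb i z).
  rewrite opprB addrC -sumrN; congr (_ - _).
  by apply: eq_bigr => j _; rewrite intrN scaleNr opprK.
have : 0 <= \sum_j - z j by apply: sumr_ge0.
case E : (\sum_j - z j) => [n|//] _; exists z.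
have := V0_remainder_R0 ib' nzpos E; rewrite nbE linearN => /(_ (V0N bz)) /cspanN.
by rewrite opprK.
Qed.

Lemma HR_decomposition h : HR h -> exists u (hs : 'I_k -> Hs),
  [/\ cspan R0 u, forall i, dotH i (hs i) & h = u + \sum_i hs i].
Proof.
move: h; apply: cspan_ind => [|x y [u1 [hs1 [u1R0 hs1d ->]]] [u2 [hs2 [u2R0 hs2d ->]]]|c b Rb].
- exists 0, (fun=> 0); split=> [|i|]; [exact: cspan0 | exact: cspan0 |].
  by rewrite big1 // addr0.
- exists (u1 + u2), (fun i => hs1 i + hs2 i); split=> [|i|]; first exact: cspanD.
    exact: cspanD (hs1d i) (hs2d i).
  by rewrite big_split addrACA.
case: (eqVneq (fH b b) 0) => [bb|bn0].
  exists (c *: t b), (fun=> 0); split=> [|i|]; [exact/cspanZ/cspan_mem | exact: cspan0 |].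
  by rewrite big1 // addr0.
have [i ib] := cls_exists (conj Rb (elimN eqP bn0)).
have [z bzR0] := cls_remainder_R0 ib.
exists (c *: t (b - zcomb i z)),
  (fun i' => if i' == i then c *: t (zcomb i z) else 0); split=> [|i'|].
- exact: cspanZ.
- by case: eqP => [->|_]; [apply/cspanZ/dotH_comb | apply: cspan0].
- by rewrite -big_mkcond big_pred1_eq -scalerDr -linearD subrK.
Qed.

Lemma H0R_cspan_R0 h : H0R h <-> cspan R0 h.
Proof.
split=> [H0h|]; last exact: cspan_R0_H0R.
have [u [hs [uR0 hsd hE]]] := HR_decomposition (proj1 H0h).
have H0uh : H0R (u - h).
  by apply: H0RD (cspan_R0_H0R uR0) _; rewrite -scaleN1r; apply: H0RZ.
have sum0 : u - h + \sum_i hs i = 0 by rewrite addrAC -hE subrr.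
have [_ hs0] := HR_direct H0uh hsd sum0.
by rewrite hE big1 ?addr0.
Qed.

End GRLA.

Theorem lemma2p4 (R : realType) (V : lmodType R[i]) (Hs : vectType R[i])
  (br : V -> V -> V) (bf : V -> V -> R[i]) (iota : {linear Hs -> V})
  (t : 'Hom(Hs, R[i]^o) -> Hs)
  (k : nat) (cls : 'I_k -> 'Hom(Hs, R[i]^o) -> Prop)
  (ell : 'I_k -> nat) (al : forall i : 'I_k, 'I_(ell i) -> 'Hom(Hs, R[i]^o)) :
  GRLA br bf iota t ->
  is_t bf iota t ->
  root_partition br bf iota t cls ->
  (forall i, is_base br bf iota t (cls i) (al i)) ->
  (* (i) *)
  (forall i h, dotH br bf iota t (cls i) (al i) h ->
     (forall h', dotH br bf iota t (cls i) (al i) h' -> bf (iota h) (iota h') = 0) ->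
     h = 0)
  /\
  (* (ii) H(R) = H^0(R) (+) (+)_i dot H_i  (internal direct sum) *)
  [/\ forall h, H0R br bf iota t h -> HR br iota t h,
      forall i h, dotH br bf iota t (cls i) (al i) h -> HR br iota t h,
      forall h, HR br iota t h ->
        exists (h0 : Hs) (hs : 'I_k -> Hs),
          [/\ H0R br bf iota t h0,
              forall i, dotH br bf iota t (cls i) (al i) (hs i) &
              h = h0 + \sum_i hs i] &
      forall (h0 : Hs) (hs : 'I_k -> Hs),
        H0R br bf iota t h0 ->
        (forall i, dotH br bf iota t (cls i) (al i) (hs i)) ->
        h0 + \sum_i hs i = 0 -> h0 = 0 /\ (forall i, hs i = 0)]
  /\
  (* (iii) *)
  (forall h, H0R br bf iota t h <-> cspan t (R0 br bf iota t) h).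
Proof.
case=> Hlie HG1 HG2 HG3 _ Ht Hpart Hbase.
split; first exact: (dotH_form_nondeg Hlie HG1 HG2 Ht HG3 Hpart Hbase).
split; last exact: (H0R_cspan_R0 Hlie HG1 HG2 Ht HG3 Hpart Hbase).
split=> [h [] // | | h | ].
- exact: (dotH_HR Hlie HG1 HG2 Ht Hpart Hbase).
- case/(HR_decomposition Hlie HG1 HG2 Ht HG3 Hpart Hbase) => u [hs [uR0 hsd hE]].
  by exists u, hs; split=> //; apply: (cspan_R0_H0R Hlie HG1 HG2 Ht HG3).
- exact: (HR_direct Hlie HG1 HG2 Ht HG3 Hpart Hbase).
Qed.
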